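(* If $m>0$ is an integer, then $G_m(\lambda)$ is a polynomial in $\lambda$ of degree $m$ with zero constant term. Writing $G_m(\lambda)=\sum_{k=1}^m(-1)^{k-1}g(m,k)\lambda^k$ (and setting $g(m,k)=0$ for $k>m$ and $g(m,0)=0$), one has for all $m>1$ and $1\le k\le m$: $$k\cdot g(m,k)=g(m-1,k)+g(m-1,k-1).$$
   Context: For an integer $m$ let $R_m(z)=\sum_{n\ge1} n^{n-m}\frac{z^n}{n!}$, a formal power series in $z$. Let $T(z)=\sum_{n\ge1}n^{n-1}\frac{z^n}{n!}$ (the tree function); it satisfies $T(z)=z e^{T(z)}$, so its compositional inverse is $z=\lambda e^{-\lambda}$. Define the formal power series $G_m(\lambda):=R_m(\lambda e^{-\lambda})$, so that $G_m(T(z))=R_m(z)$. *)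

From mathcomp Require Import all_boot all_order all_algebra.
Set Implicit Arguments. Unset Strict Implicit. Unset Printing Implicit Defensive.
Import Order.TTheory GRing.Theory Num.Theory.
Local Open Scope ring_scope.

Definition fps := nat -> rat.

Definition fps_mul (f g : fps) : fps :=
  fun N => \sum_(i < N.+1) f i * g (N - i)%N.

Definition fps_one : fps := fun N => if N == 0%N then 1 else 0.

Fixpoint fps_pow (f : fps) (n : nat) : fps :=
  match n with 0%N => fps_one | n'.+1 => fps_mul f (fps_pow f n') end.

(* Composition a(f) for f with zero constant term:
   [z^N] sum_n a_n f^n = sum_{n <= N} a_n [z^N] f^n. *)
Definition fps_comp (a f : fps) : fps :=
  fun N => \sum_(n < N.+1) a n * fps_pow f n N.

Definition fps_X : fps := fun N => if N == 1%N then 1 else 0.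
Definition fps_expneg : fps := fun k => (-1) ^+ k / (k`!)%:R.
Definition lam_exp_neg : fps := fps_mul fps_X fps_expneg.

Definition Rser (m : int) : fps :=
  fun n => if n == 0%N then 0 else ((n%:R : rat) ^ (n%:Z - m)) / (n`!)%:R.

Definition Gser (m : int) : fps := fps_comp (Rser m) lam_exp_neg.

Definition gcoef (m k : nat) : rat :=
  if (k == 0%N) || (m < k)%N then 0 else (-1) ^+ k.-1 * Gser m%:Z k.

From mathcomp Require Import all_boot all_order all_algebra zify ring.
Import Order.TTheory GRing.Theory Num.Theory.
Local Open Scope ring_scope.

(* Since (λ e^-λ)^n = λ^n e^-nλ, the N-th coefficient of G_m is
   (1/N!) Σ_{n=1..N} C(N,n) (-1)^(N-n) n^(N-m): an N-th finite difference of
   x^(N-m) at 0, with its n = 0 term omitted.  Absorption and Pascal's rule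
   turn this into the coefficientwise form of λ G_{m+1}' = (1 - λ) G_m.  By the
   binomial theorem N! [λ^N] G_N = -(-1)^N is nonzero, and the differential
   equation then forces [λ^N] G_m = 0 for 0 < m < N, so G_m is a polynomial of
   degree m.  Read through the signs of g(m,k), the same equation is the
   recurrence k g(m,k) = g(m-1,k) + g(m-1,k-1). *)

Lemma fact_neq0 n : (n`!)%:R != 0 :> rat.
Proof. by rewrite pnatr_eq0 -lt0n fact_gt0. Qed.

Lemma natr_bin_fact {n k} : (k <= n)%N ->
  'C(n, k)%:R * ((k`!)%:R * ((n - k)`!)%:R) = (n`!)%:R :> rat.
Proof. by move=> hk; rewrite -!natrM bin_fact. Qed.

Definition fps_shift (a : nat) (f : fps) : fps :=
  fun N => if (a <= N)%N then f (N - a)%N else 0.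

Definition fps_exp (c : rat) : fps := fun k => c ^+ k / (k`!)%:R.

Lemma eq_fps_mul {f1 f2 g1 g2 : fps} :
  f1 =1 f2 -> g1 =1 g2 -> fps_mul f1 g1 =1 fps_mul f2 g2.
Proof. by move=> ef eg N; apply: eq_bigr => i _; rewrite ef eg. Qed.

Lemma eq_fps_shift {a} {f g : fps} : f =1 g -> fps_shift a f =1 fps_shift a g.
Proof. by move=> efg N; rewrite /fps_shift efg. Qed.

Lemma fps_mul_shift a b (f g : fps) :
  fps_mul (fps_shift a f) (fps_shift b g) =1 fps_shift (a + b) (fps_mul f g).
Proof.
move=> N; rewrite /fps_mul /fps_shift; case: (leqP (a + b) N) => [hN|hN]; last first.
  apply: big1 => i _; case: ifP => ha; case: ifP => hb; rewrite ?mul0r ?mulr0 //.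
  by exfalso; move: (ltn_ord i); lia.
have [M ->] : exists M, N = (a + b + M)%N by exists (N - (a + b))%N; lia.
rewrite (_ : (a + b + M).+1 = a + M.+1 + b)%N; last by lia.
rewrite big_split_ord /= [X in _ + X]big1 ?addr0; last first.
  move=> i _; rewrite [X in _ * X]ifF ?mulr0 //.
  by apply/negbTE; rewrite -ltnNge; move: (ltn_ord i); lia.
rewrite big_split_ord /= big1 ?add0r; last first.
  by move=> i _; case: ifP => h; rewrite ?mul0r //; exfalso; move: h (ltn_ord i); lia.
have -> : (a + b + M - (a + b) = M)%N by lia.
apply: eq_bigr => i _; rewrite /= !ifT; try (move: (ltn_ord i); lia).
by congr (f _ * g _); move: (ltn_ord i); lia.
Qed.

Lemma fps_mul_exp c d : fps_mul (fps_exp c) (fps_exp d) =1 fps_exp (c + d).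
Proof.
move=> N; rewrite /fps_mul /fps_exp addrC exprDn mulr_suml.
apply: eq_bigr => -[i /= hi] _; rewrite ltnS in hi.
rewrite -(natr_bin_fact hi) -mulr_natr.
have := fact_neq0 i; have := fact_neq0 (N - i).
have : 'C(N, i)%:R != 0 :> rat by rewrite pnatr_eq0 -lt0n bin_gt0.
by move=> h1 h2 h3; field; rewrite h1 h2 h3.
Qed.

Lemma fps_X_shift : fps_X =1 fps_shift 1 (fps_exp 0).
Proof. by case=> [|[|N]] //; rewrite /fps_shift /fps_exp /= expr0n /= mul0r. Qed.

Lemma fps_one_shift : fps_one =1 fps_shift 0 (fps_exp 0).
Proof. by case=> [|N]; rewrite /fps_shift /fps_exp /= ?expr0 ?divr1 // expr0n mul0r. Qed.

Lemma lam_exp_neg_shift : lam_exp_neg =1 fps_shift 1 (fps_exp (-1)).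
Proof.
move=> N; have expneg_shift : fps_expneg =1 fps_shift 0 (fps_exp (-1)).
  by move=> k; rewrite /fps_shift subn0.
rewrite /lam_exp_neg (eq_fps_mul fps_X_shift expneg_shift) fps_mul_shift.
by rewrite (eq_fps_shift (fps_mul_exp _ _)) add0r.
Qed.

Lemma fps_pow_lam_exp_neg n :
  fps_pow lam_exp_neg n =1 fps_shift n (fps_exp (- n%:R)).
Proof.
elim: n => [|n IH] N /=; first by rewrite fps_one_shift oppr0.
rewrite (eq_fps_mul lam_exp_neg_shift IH) fps_mul_shift.
by rewrite (eq_fps_shift (fps_mul_exp _ _)) -opprD -natr1 addrC.
Qed.

Definition Gscaled (m : int) (N : nat) : rat :=
  \sum_(i < N) 'C(N, i.+1)%:R * (-1) ^+ (N - i.+1) * i.+1%:R ^ (N%:Z - m).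

Lemma Gser_Gscaled m N : Gser m N = Gscaled m N / (N`!)%:R.
Proof.
rewrite /Gser /fps_comp big_ord_recl {1}/Rser eqxx mul0r add0r /Gscaled mulr_suml.
apply: eq_bigr => i _; have hi := ltn_ord i.
rewrite lift0 fps_pow_lam_exp_neg /fps_shift hi.
rewrite /Rser /fps_exp /=.
have e : N%:Z - m = (i.+1%:Z - m) + (N - i.+1)%N%:Z by lia.
rewrite [in RHS]e [in RHS]expfzDr ?pnatr_eq0 // -exprnP [in LHS]exprNn.
rewrite -(natr_bin_fact hi).
have := fact_neq0 i.+1; have := fact_neq0 (N - i.+1).
have : 'C(N, i.+1)%:R != 0 :> rat by rewrite pnatr_eq0 -lt0n bin_gt0.
by move=> h1 h2 h3; field; rewrite h1 h2 h3.
Qed.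

Lemma Gscaled_rec m N :
  Gscaled m N.+1 = N.+1%:R * (Gscaled (m + 1) N.+1 + Gscaled m N).
Proof.
pose S : rat := \sum_(i < N.+1)
   'C(N, i.+1)%:R * (-1) ^+ (N - i) * i.+1%:R ^ (N%:Z - m).
have absorption : Gscaled m N.+1 = N.+1%:R * \sum_(i < N.+1)
    'C(N, i)%:R * (-1) ^+ (N - i) * i.+1%:R ^ (N%:Z - m).
  rewrite /Gscaled mulr_sumr; apply: eq_bigr => i _.
  have -> : N.+1%:Z - m = 1 + (N%:Z - m) by lia.
  rewrite expfzDr ?pnatr_eq0 // expr1z subSS.
  have /(congr1 (fun k => k%:R : rat)) := mul_bin_diag N.+1 i.
  rewrite !natrM /= => h; transitivity
    ((i.+1%:R * 'C(N.+1, i.+1)%:R : rat) * (-1) ^+ (N - i) * i.+1%:R ^ (N%:Z - m)).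
    by ring.
  by rewrite -h; ring.
have pascal : Gscaled (m + 1) N.+1 = \sum_(i < N.+1)
    'C(N, i)%:R * (-1) ^+ (N - i) * i.+1%:R ^ (N%:Z - m) + S.
  rewrite /Gscaled /S -big_split; apply: eq_bigr => i _.
  have -> : N.+1%:Z - (m + 1) = N%:Z - m by lia.
  by rewrite binS natrD subSS /=; ring.
have cancel : S + Gscaled m N = 0.
  rewrite /S big_ord_recr /= bin_small // !mul0r addr0 /Gscaled -big_split.
  apply: big1 => i _; have -> : (N - i = (N - i.+1).+1)%N by move: (ltn_ord i); lia.
  by rewrite exprS /=; ring.
by rewrite absorption pascal -addrA cancel addr0.
Qed.

Lemma Gscaled_diag N : Gscaled N.+1%:Z N.+1 = - (-1) ^+ N.+1.
Proof.
have := exprDn (-1 : rat) 1 N.+1.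
rewrite addNr expr0n /= big_ord_recl subn0 bin0 expr0 mulr1.
under eq_bigr => i _ do rewrite lift0 expr1n mulr1.
move=> binomial; apply: (addrI ((-1) ^+ N.+1)); rewrite addrN [RHS]binomial mulr1n.
congr (_ + _); apply: eq_bigr => i _.
by rewrite subrr expr0z mulr1 mulr_natl.
Qed.

Lemma Gscaled_vanish e N : (0 < e < N)%N -> Gscaled (N%:Z - e%:Z) N = 0.
Proof.
elim: e N => [//|e IH] [//|N] /andP[_ hN].
rewrite Gscaled_rec; case: e IH hN => [|e] IH hN.
  case: N hN => [//|N] _.
  have -> : N.+2%:Z - 1%N%:Z + 1 = N.+2%:Z by lia.
  have -> : N.+2%:Z - 1%N%:Z = N.+1%:Z by lia.
  by rewrite !Gscaled_diag exprS mulN1r opprK subrr mulr0.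
have -> : N.+1%:Z - e.+2%:Z + 1 = N.+1%:Z - e.+1%:Z by lia.
have -> : N.+1%:Z - e.+2%:Z = N%:Z - e.+1%:Z by lia.
by rewrite !IH ?addr0 ?mulr0 //; apply/andP; split => //; lia.
Qed.

Lemma Gser0 m : Gser m 0 = 0.
Proof. by rewrite Gser_Gscaled /Gscaled big_ord0 mul0r. Qed.

Lemma Gser_rec m k : k.+1%:R * Gser (m + 1) k.+1 = Gser m k.+1 - Gser m k.
Proof.
rewrite !Gser_Gscaled [Gscaled m k.+1]Gscaled_rec factS natrM.
have := fact_neq0 k; have : k.+1%:R != 0 :> rat by rewrite pnatr_eq0.
by move=> hk1 hk; field; rewrite hk addrC natr1 hk1.
Qed.

Lemma Gser_vanish m N : (0 < m < N)%N -> Gser m%:Z N = 0.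
Proof.
move=> hmN; rewrite Gser_Gscaled.
have -> : m%:Z = N%:Z - (N - m)%N%:Z by lia.
by rewrite Gscaled_vanish ?mul0r //; lia.
Qed.

Lemma Gser_diag_neq0 m : (0 < m)%N -> Gser m%:Z m != 0.
Proof.
case: m => [//|m] _; rewrite Gser_Gscaled Gscaled_diag mulf_neq0 //.
  by rewrite oppr_eq0 expf_neq0 // oppr_eq0 oner_eq0.
by rewrite invr_eq0 fact_neq0.
Qed.

Lemma gcoef_Gser m k : (0 < m)%N -> gcoef m k.+1 = (-1) ^+ k * Gser m%:Z k.+1.
Proof.
move=> hm; rewrite /gcoef /=; case: ltnP => // hk.
by rewrite Gser_vanish ?mulr0 // hm.
Qed.

Theorem corollary2 :
  (forall m : nat, (0 < m)%N ->
     exists p : {poly rat},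
       size p = m.+1 /\ p`_0 = 0 /\ (forall N : nat, Gser m%:Z N = p`_N))
  /\
  (forall m k : nat, (1 < m)%N -> (1 <= k <= m)%N ->
     k%:R * gcoef m k = gcoef m.-1 k + gcoef m.-1 k.-1).
Proof.
split.
  move=> m hm; exists (\poly_(i < m.+1) Gser m%:Z i); split; [|split].
  - exact/size_poly_eq/Gser_diag_neq0.
  - by rewrite coef_poly Gser0.
  - move=> N; rewrite coef_poly; case: ltnP => // hN.
    by rewrite Gser_vanish // hm.
move=> [//|[//|m]] [//|k] _ _ /=.
rewrite !gcoef_Gser // mulrCA -[m.+2]addn1 PoszD Gser_rec mulrBr.
case: k => [|k]; first by rewrite Gser0 /gcoef /=; ring.
by rewrite gcoef_Gser // exprS mulN1r !mulNr opprK.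
Qed.
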